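(* Let $P$ be a countable multiset of primes, $G=\bigoplus_{p\in P}\mathbb{F}_p$, let $X$ be an ergodic $G$-system, let $F:X\to S^1$ be a phase polynomial of degree $<k$, and let $p$ be a prime with $p\geq k$. Suppose $F$ takes values in $C_{p^m}$ for some $m\in\mathbb{N}$. Then there is a constant $c\in S^1$ such that $cF$ takes values in $C_p$.
   Context: $C_r$ is the group of $r$-th roots of unity. A $G$-system is a compact metrizable probability space with measure-preserving $G$-action $(T_g)$; ergodic: only constants invariant. Phase polynomial of degree $<k$: $\Delta_{h_1}\cdots\Delta_{h_k}F=1$ a.e. for all $h_i\in G$, where $\Delta_h\phi=(\phi\circ T_h)/\phi$. *)

From HB Require Import structures.
From mathcomp Require Import all_boot all_order all_algebra.
From mathcomp Require Import all_classical all_reals all_analysis.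
From mathcomp Require Import complex.
Set Implicit Arguments. Unset Strict Implicit. Unset Printing Implicit Defensive.
Import Order.TTheory GRing.Theory Num.Theory.
Local Open Scope classical_set_scope.
Local Open Scope ring_scope.

(* I is a countable (possibly finite) index type, q : I -> nat the primes,
   so {q i | i in I} is a countable multiset of primes. *)
Definition Gfun (I : Type) (q : I -> nat) := forall i : I, 'F_(q i).

(* elements of the direct sum: finitely supported *)
Definition fin_supp (I : eqType) (q : I -> nat) (g : Gfun q) : Prop :=
  exists s : seq I, forall i, i \notin s -> g i = 0.

Definition G0 (I : Type) (q : I -> nat) : Gfun q := fun i => 0.
Definition Gadd (I : Type) (q : I -> nat) (g h : Gfun q) : Gfun q :=
  fun i => g i + h i.

Definition is_metric (R : realType) (X : Type) (dist : X -> X -> R) : Prop :=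
  [/\ forall x y, 0 <= dist x y,
      forall x y, dist x y = 0 <-> x = y,
      forall x y, dist x y = dist y x &
      forall x y z, dist x z <= dist x y + dist y z].

Definition dopen (R : realType) (X : Type) (dist : X -> X -> R) (A : set X) : Prop :=
  forall x, A x -> exists2 e : R, 0 < e & forall y, dist x y < e -> A y.

Definition dcompact (R : realType) (X : Type) (dist : X -> X -> R) : Prop :=
  forall (J : Type) (U : J -> set X), (forall j, dopen dist (U j)) ->
    \bigcup_j U j = setT ->
    exists s : seq J, forall x, exists2 n, (n < size s)%N & (forall j0 : J, U (nth j0 s n) x).

Definition compact_metrizable_Borel (R : realType) (d : measure_display)
  (X : measurableType d) : Prop :=
  exists dist : X -> X -> R,
    [/\ is_metric dist, dcompact dist &
        forall A : set X, measurable A <-> <<s dopen dist >> A].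

Definition G_system (R : realType) (d : measure_display) (X : measurableType d)
  (mu : probability X R) (I : eqType) (q : I -> nat)
  (T : Gfun q -> X -> X) : Prop :=
  [/\ compact_metrizable_Borel R X,
      forall g, fin_supp g -> measurable_fun setT (T g),
      forall g A, fin_supp g -> measurable A -> mu (T g @^-1` A) = mu A,
      forall x, T (G0 q) x = x &
      forall g h x, fin_supp g -> fin_supp h -> T (Gadd g h) x = T g (T h x)].

Definition ergodic (R : realType) (d : measure_display) (X : measurableType d)
  (mu : probability X R) (I : eqType) (q : I -> nat)
  (T : Gfun q -> X -> X) : Prop :=
  forall f : X -> R, measurable_fun setT f ->
    (forall g, fin_supp g -> {ae mu, forall x, f (T g x) = f x}) ->
    exists c : R, {ae mu, forall x, f x = c}.

Definition circle_mfun (R : realType) (d : measure_display) (X : measurableType d)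
  (F : X -> R[i]) : Prop :=
  [/\ measurable_fun setT (fun x => complex.Re (F x)),
      measurable_fun setT (fun x => complex.Im (F x)) &
      forall x, `|F x| = 1].

Definition Delta (I : Type) (q : I -> nat) (X : Type) (R : realType)
  (T : Gfun q -> X -> X) (h : Gfun q) (F : X -> R[i]) : X -> R[i] :=
  fun x => F (T h x) / F x.

Definition Delta_iter (I : Type) (q : I -> nat) (X : Type) (R : realType)
  (T : Gfun q -> X -> X) (hs : seq (Gfun q)) (F : X -> R[i]) : X -> R[i] :=
  foldr (Delta T) F hs.

Definition phase_poly_lt (R : realType) (d : measure_display) (X : measurableType d)
  (mu : probability X R) (I : eqType) (q : I -> nat)
  (T : Gfun q -> X -> X) (k : nat) (F : X -> R[i]) : Prop :=
  circle_mfun F /\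
  forall hs : seq (Gfun q), size hs = k -> (forall h, h \in hs -> fin_supp h) ->
    {ae mu, forall x, Delta_iter T hs F x = 1}.

From HB Require Import structures.
From mathcomp Require Import all_boot all_order all_algebra.
From mathcomp Require Import all_classical all_reals all_analysis.
From mathcomp Require Import complex measurable_realfun.
Set Implicit Arguments.
Unset Strict Implicit.
Import Order.TTheory GRing.Theory Num.Theory.
Local Open Scope classical_set_scope.
Local Open Scope ring_scope.

(* Along an orbit x, T_g x, T_g^2 x, ... a phase polynomial of degree < k gives a
   sequence u whose k-th multiplicative difference is 1, and u is N-periodic when
   N g = 0.  If g has order p >= k, Newton's forward difference formula over one
   period shows, by induction on k, that (qdiff u)^p = 1; if g has order coprime
   to p, the same induction together with u^(p^m) = 1 forces qdiff u = 1.
   Splitting an arbitrary g into these two parts gives (Delta_g F)^p = 1 for all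
   g, so F^p is invariant, hence a.e. equal to a constant w of modulus 1, and
   c is a p-th root of 1/w. *)

Lemma expr_coprime_eq1 (K : pzRingType) (c : K) a b :
  (0 < a)%N -> coprime a b -> c ^+ a = 1 -> c ^+ b = 1 -> c = 1.
Proof.
move=> a_gt0 cop_ab ca1 cb1; have [x _] := Bezoutl b a_gt0.
rewrite (eqP cop_ab) => /dvdnP [y bezout].
have : c ^+ (1 + x * b) = c ^+ (y * a) by rewrite bezout.
by rewrite exprD expr1 mulnC [(y * a)%N]mulnC !exprM cb1 ca1 !expr1n mulr1.
Qed.

Section MultiplicativeDifference.
Context {K : fieldType}.
Implicit Types u w : nat -> K.

Definition qdiff u : nat -> K := fun j => u j.+1 / u j.

Lemma qdiff_neq0 u : (forall j, u j != 0) -> forall j, qdiff u j != 0.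
Proof. by move=> u_neq0 j; rewrite mulf_neq0 ?invr_eq0. Qed.

Lemma qdiff_torsion n u : (forall j, u j ^+ n = 1) -> forall j, qdiff u j ^+ n = 1.
Proof. by move=> un1 j; rewrite exprMn exprVn !un1 invr1 mulr1. Qed.

Lemma iter_qdiff_torsion s n u :
  (forall j, u j ^+ n = 1) -> forall j, iter s qdiff u j ^+ n = 1.
Proof. by elim: s => [|s IHs] //= un1; apply/qdiff_torsion/IHs. Qed.

Lemma iter_qdiff_eq1 k n u : (k <= n)%N ->
  (forall j, iter k qdiff u j = 1) -> forall j, iter n qdiff u j = 1.
Proof.
move=> /subnK <- uk1; rewrite iterD; elim: (n - k)%N => [|s IHs] j //=.
by rewrite /qdiff !IHs divr1.
Qed.

Lemma qdiff_periodic N u :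
  (forall j, u (j + N)%N = u j) -> forall j, qdiff u (j + N)%N = qdiff u j.
Proof. by move=> uN j; rewrite /qdiff -addSn !uN. Qed.

Lemma prod_qdiff u j L : (forall j, u j != 0) ->
  \prod_(i < L) qdiff u (i + j) = u (L + j)%N / u j.
Proof.
move=> u_neq0; elim: L => [|L IHL]; first by rewrite big_ord0 add0n divff.
by rewrite big_ord_recr /= IHL /qdiff addSn mulrC mulrA divfK.
Qed.

Lemma prod_Newton w j L : (forall j, w j != 0) ->
  \prod_(i < L) w (i + j)%N = \prod_(s < L) iter s qdiff w j ^+ 'C(L, s.+1).
Proof.
elim: L w => [|L IHL] w w_neq0; first by rewrite !big_ord0.
have wS i : w (i.+1 + j)%N = w (i + j)%N * qdiff w (i + j).
  by rewrite /qdiff addSn mulrC divfK.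
rewrite big_ord_recl /=; under eq_bigr do rewrite wS.
rewrite big_split /= IHL // IHL; last exact: qdiff_neq0.
under [RHS]eq_bigr do rewrite binS exprD.
rewrite big_split /= big_ord_recr /= bin_small // expr0 mulr1.
rewrite big_ord_recl /= bin0 expr1.
under [X in _ = _ * (_ * X)]eq_bigr do rewrite add0n /bump leq0n add1n -iterS iterSr.
by rewrite add0n mulrCA.
Qed.

Lemma periodic_prime_qdiff_torsion p k u : prime p -> (k <= p)%N ->
  (forall j, u j != 0) -> (forall j, u (j + p)%N = u j) ->
  (forall j, iter k qdiff u j = 1) -> forall j, qdiff u j ^+ p = 1.
Proof.
move=> p_prime; elim: k u => [|k IHk] u le_kp u_neq0 up uk1 j.
  by rewrite /qdiff !(uk1 : forall j, u j = 1) divr1 expr1n.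
have ddu_torsion : forall j, qdiff (qdiff u) j ^+ p = 1.
  apply: IHk (ltnW le_kp) (qdiff_neq0 u_neq0) (qdiff_periodic up) _ => i.
  by rewrite -iterSr.
(* Newton's formula over one period: every factor but (qdiff u j)^p is 1, since
   for 0 < s.+1 < p the prime p divides 'C(p, s.+1) and the higher differences are
   p-torsion by induction, while the last factor is the p-th difference, 1 as k <= p. *)
have := @prod_Newton (qdiff u) j p (qdiff_neq0 u_neq0).
rewrite prod_qdiff // addnC up divff //.
rewrite -(prednK (prime_gt0 p_prime)) big_ord_recl /= bin1 prednK ?prime_gt0 //.
rewrite big1 ?mulr1 // => -[s /= _] _; rewrite add0n /bump leq0n add1n -iterS.
have [lt_s2p | le_ps2] := ltnP s.+2 p.
  have /dvdnP [t ->] := @prime_dvd_bin s.+2 p p_prime lt_s2p.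
  by rewrite mulnC exprM !iterSr iter_qdiff_torsion // expr1n.
by rewrite -iterSr (iter_qdiff_eq1 _ uk1) ?expr1n // (leq_trans le_kp).
Qed.

Lemma periodic_coprime_qdiff_eq1 N M k u : (0 < N)%N -> coprime N M ->
  (forall j, u j != 0) -> (forall j, u (j + N)%N = u j) ->
  (forall j, u j ^+ M = 1) -> (forall j, iter k qdiff u j = 1) ->
  forall j, qdiff u j = 1.
Proof.
move=> N_gt0 coNM; elim: k u => [|k IHk] u u_neq0 uN uM uk1.
  by move=> j; rewrite /qdiff !(uk1 : forall j, u j = 1) divr1.
have ddu1 : forall j, qdiff (qdiff u) j = 1.
  apply: IHk (qdiff_neq0 u_neq0) (qdiff_periodic uN) (qdiff_torsion uM) _ => i.
  by rewrite -iterSr.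
have du_const j : qdiff u j = qdiff u 0.
  by elim: j => // j <-; apply/divr1_eq/ddu1.
(* (qdiff u 0)^N = 1, as the product of qdiff u over a period telescopes. *)
move=> j; rewrite du_const; apply: (expr_coprime_eq1 N_gt0 coNM).
- have := @prod_qdiff u 0 N u_neq0; rewrite addn0 -[u N]/(u (0 + N)%N) uN divff //.
  by under eq_bigr do rewrite du_const; rewrite prodr_const card_ord.
- exact: qdiff_torsion.
Qed.

End MultiplicativeDifference.

Lemma circle_mfun_neq0 (R : realType) d (X : measurableType d) (F : X -> R[i]) :
  circle_mfun F -> forall x, F x != 0.
Proof. by case=> _ _ F1 x; rewrite -normr_eq0 F1 oner_eq0. Qed.

Section GSystem.
Variables (R : realType) (I : countType) (q : I -> nat) (d : measure_display).
Variables (X : measurableType d) (mu : probability X R) (T : Gfun q -> X -> X).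
Hypothesis HG : G_system mu T.
Implicit Types (g h : Gfun q) (F : X -> R[i]).

Lemma ae_comp_T g (P : X -> Prop) : fin_supp g ->
  {ae mu, forall x, P x} -> {ae mu, forall x, P (T g x)}.
Proof.
move=> fg [A [mA A0 PA]]; case: HG => _ mT T_mu _ _.
exists (T g @^-1` A); split => [|//|x /PA //].
  by have := mT g fg measurableT A mA; rewrite setTI.
by rewrite T_mu.
Qed.

Definition Gmuln g n : Gfun q := fun i => g i *+ n.

Lemma fin_supp_Gmuln g n : fin_supp g -> fin_supp (Gmuln g n).
Proof. by case=> s gs; exists s => i /gs; rewrite /Gmuln => ->; rewrite mul0rn. Qed.

Lemma T_Gmuln g n x : fin_supp g -> T (Gmuln g n) x = iter n (T g) x.
Proof.
move=> fg; case: HG => _ _ _ T0 TD; elim: n => [|n IHn] /=.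
  have -> : Gmuln g 0 = G0 q.
    by apply: functional_extensionality_dep => i; rewrite /Gmuln mulr0n.
  exact: T0.
have -> : Gmuln g n.+1 = Gadd g (Gmuln g n).
  by apply: functional_extensionality_dep => i; rewrite /Gmuln /Gadd mulrS.
by rewrite TD ?IHn //; exact: fin_supp_Gmuln.
Qed.

Lemma ae_orbit g (P : X -> Prop) : fin_supp g ->
  {ae mu, forall x, P x} -> {ae mu, forall x, forall j, P (iter j (T g) x)}.
Proof.
move=> fg aeP; apply: (ae_foralln (P := fun j x => P (iter j (T g) x))) => j.
by apply: filterS (ae_comp_T (fin_supp_Gmuln j fg) aeP) => x; rewrite T_Gmuln.
Qed.

Definition orbit_seq F g x : nat -> R[i] := fun j => F (iter j (T g) x).

Lemma orbit_seq_periodic F g N x : fin_supp g -> Gmuln g N = G0 q ->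
  forall j, orbit_seq F g x (j + N) = orbit_seq F g x j.
Proof.
move=> fg gN0 j; case: HG => _ _ _ T0 _.
by rewrite /orbit_seq iterD -[iter N (T g) x]T_Gmuln // gN0 T0.
Qed.

Lemma Delta_iter_nseq F g n x j :
  Delta_iter T (nseq n g) F (iter j (T g) x) = iter n qdiff (orbit_seq F g x) j.
Proof. by elim: n j => [|n IHn] j //=; rewrite /Delta -iterS !IHn. Qed.

Lemma phase_poly_orbit_seq F k g : fin_supp g -> phase_poly_lt mu T k F ->
  {ae mu, forall x, forall j, iter k qdiff (orbit_seq F g x) j = 1}.
Proof.
move=> fg [_ PF].
have : {ae mu, forall x, Delta_iter T (nseq k g) F x = 1}.
  by apply: PF => [|h]; rewrite ?size_nseq // mem_nseq => /andP[_ /eqP->].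
by move=> /(ae_orbit fg); apply: filterS => x Fx j; rewrite -Delta_iter_nseq.
Qed.

Lemma Delta_prime_order_torsion F k p a : prime p -> (k <= p)%N -> fin_supp a ->
  Gmuln a p = G0 q -> phase_poly_lt mu T k F ->
  {ae mu, forall x, Delta T a F x ^+ p = 1}.
Proof.
move=> p_prime le_kp fa ap0 PF.
apply: filterS (phase_poly_orbit_seq fa PF) => x Fk1.
exact: (periodic_prime_qdiff_torsion p_prime le_kp (fun j => circle_mfun_neq0 PF.1 _)
          (orbit_seq_periodic _ _ fa ap0) Fk1 0).
Qed.

Lemma Delta_coprime_order_eq1 F k N M b : (0 < N)%N -> coprime N M -> fin_supp b ->
  Gmuln b N = G0 q -> phase_poly_lt mu T k F -> {ae mu, forall x, F x ^+ M = 1} ->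
  {ae mu, forall x, Delta T b F x = 1}.
Proof.
move=> N_gt0 coNM fb bN0 PF FM.
apply: filterS2 (phase_poly_orbit_seq fb PF) (ae_orbit fb FM) => x Fk1 FxM.
exact: (periodic_coprime_qdiff_eq1 N_gt0 coNM (fun j => circle_mfun_neq0 PF.1 _)
          (orbit_seq_periodic _ _ fb bN0) FxM Fk1 0).
Qed.

Lemma Delta_Gadd F a b x : (forall x, F x != 0) -> fin_supp a -> fin_supp b ->
  Delta T (Gadd a b) F x = Delta T a F (T b x) * Delta T b F x.
Proof.
move=> F_neq0 fa fb; case: HG => _ _ _ _ TD.
by rewrite /Delta TD // mulrA divfK.
Qed.

Lemma Gmuln_eq0 g n : (forall i, prime (q i)) ->
  (forall i, g i != 0 -> (q i %| n)%N) -> Gmuln g n = G0 q.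
Proof.
move=> q_prime gn; apply: functional_extensionality_dep => i; rewrite /Gmuln /G0.
have [-> | /gn /dvdnP [t ->]] := eqVneq (g i) 0; first by rewrite mul0rn.
by rewrite mulrnA (mulrn_pchar (pchar_Fp (q_prime i))).
Qed.

Lemma Delta_phase_poly_torsion F k p m h : (forall i, prime (q i)) ->
  prime p -> (k <= p)%N -> fin_supp h -> phase_poly_lt mu T k F ->
  {ae mu, forall x, F x ^+ (p ^ m) = 1} -> {ae mu, forall x, Delta T h F x ^+ p = 1}.
Proof.
(* Split h into its p-part a, killed by p, and the rest b, killed by a product N
   of primes other than p. *)
move=> q_prime p_prime le_kp fh PF Fpm; have [s hs] := fh.
pose a : Gfun q := fun i => if q i == p then h i else 0.
pose b : Gfun q := fun i => if q i == p then 0 else h i.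
pose N := (\prod_(j <- s | q j != p) q j)%N.
have fa : fin_supp a by exists s => i /hs; rewrite /a; case: ifP.
have fb : fin_supp b by exists s => i /hs; rewrite /b; case: ifP.
have hab : h = Gadd a b.
  apply: functional_extensionality_dep => i; rewrite /Gadd /a /b.
  by case: ifP; rewrite ?addr0 ?add0r.
have ap0 : Gmuln a p = G0 q.
  apply: Gmuln_eq0 => // i; rewrite /a.
  by case: (q i =P p) => [<- | _]; rewrite ?dvdnn ?eqxx.
have bN0 : Gmuln b N = G0 q.
  apply: Gmuln_eq0 => // i; rewrite /b.
  case: (q i =P p) => [_ | qip bi]; first by rewrite eqxx.
  have si : i \in s by apply/negPn/negP => /hs bi0; rewrite bi0 eqxx in bi.
  rewrite /N (big_rem _ si) /=; case: eqP => [/qip // | _].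
  exact: dvdn_mulr.
have N_gt0 : (0 < N)%N by rewrite prodn_gt0 // => j; exact: prime_gt0.
have coNp : coprime N (p ^ m).
  rewrite coprimeXr //; apply: (big_ind (fun n => coprime n p)) => [|x y|j qjp].
  - exact: coprime1n.
  - by rewrite coprimeMl => ->.
  - by rewrite prime_coprime // dvdn_prime2.
have Da := ae_comp_T fb (Delta_prime_order_torsion p_prime le_kp fa ap0 PF).
have Db := Delta_coprime_order_eq1 N_gt0 coNp fb bN0 PF Fpm.
apply: filterS2 Da Db => x Dax Dbx.
by rewrite hab Delta_Gadd // ?Dbx ?mulr1 //; exact: circle_mfun_neq0 PF.1.
Qed.

End GSystem.

Local Notation Re := complex.Re.
Local Notation Im := complex.Im.

Lemma measurable_ReIm_exprn (R : realType) d (X : measurableType d) (F : X -> R[i]) n :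
  measurable_fun setT (fun x => Re (F x)) -> measurable_fun setT (fun x => Im (F x)) ->
  measurable_fun setT (fun x => Re (F x ^+ n)) /\
  measurable_fun setT (fun x => Im (F x ^+ n)).
Proof.
move=> mRe mIm; elim: n => [|n [IHRe IHIm]]; first by split; exact: measurable_cst.
have ReM (z w : R[i]) : Re (z * w) = Re z * Re w - Im z * Im w by case: z; case: w.
have ImM (z w : R[i]) : Im (z * w) = Re z * Im w + Im z * Re w by case: z; case: w.
under [X in measurable_fun _ X /\ _]eq_fun do rewrite exprS ReM.
under [X in _ /\ measurable_fun _ X]eq_fun do rewrite exprS ImM.
by split; [apply: measurable_funB | apply: measurable_funD]; exact: measurable_funM.
Qed.

Lemma ergodic_complex_const (R : realType) (I : countType) (q : I -> nat) d
    (X : measurableType d) (mu : probability X R) (T : Gfun q -> X -> X)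
    (G : X -> R[i]) :
  ergodic mu T ->
  measurable_fun setT (fun x => Re (G x)) -> measurable_fun setT (fun x => Im (G x)) ->
  (forall g, fin_supp g -> {ae mu, forall x, G (T g x) = G x}) ->
  exists w, {ae mu, forall x, G x = w}.
Proof.
move=> erg mRe mIm Ginv.
have [a Ga] : exists a, {ae mu, forall x, Re (G x) = a}.
  by apply: erg mRe _ => g /Ginv; apply: filterS => x ->.
have [b Gb] : exists b, {ae mu, forall x, Im (G x) = b}.
  by apply: erg mIm _ => g /Ginv; apply: filterS => x ->.
by exists (a +i* b)%C; apply: filterS2 Ga Gb => x <- <-; case: (G x).
Qed.

Lemma probability_ae_exists (R : realType) d (X : measurableType d)
    (mu : probability X R) (P : X -> Prop) :
  {ae mu, forall x, P x} -> exists x, P x.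
Proof.
move=> [A [mA A0 NPA]]; apply: contrapT => noP.
have : mu setT = 0%E.
  apply: (subset_measure0 (A := setT) (B := A)) => // x _.
  by apply: NPA => Px; apply: noP; exists x.
by rewrite probability_setT => /eqP; rewrite eqe oner_eq0.
Qed.

Theorem theoremB9 (R : realType) (I : countType) (q : I -> nat)
  (q_prime : forall i, prime (q i))
  (d : measure_display) (X : measurableType d) (mu : probability X R)
  (T : Gfun q -> X -> X)
  (HG : G_system mu T) (Herg : ergodic mu T)
  (k : nat) (F : X -> R[i]) (HF : phase_poly_lt mu T k F)
  (p : nat) (p_prime : prime p) (hpk : (k <= p)%N)
  (m : nat) (Hm : {ae mu, forall x, F x ^+ (p ^ m) = 1}) :
  exists c : R[i], `|c| = 1 /\ {ae mu, forall x, (c * F x) ^+ p = 1}.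
Proof.
have [[mRe mIm F1] _] := HF.
have Fp_inv g : fin_supp g -> {ae mu, forall x, F (T g x) ^+ p = F x ^+ p}.
  move=> fg; apply: filterS (Delta_phase_poly_torsion HG q_prime p_prime hpk fg HF Hm).
  by move=> x; rewrite /Delta exprMn exprVn => /divr1_eq.
have [mRep mImp] := measurable_ReIm_exprn p mRe mIm.
have [w Fpw] := ergodic_complex_const Herg mRep mImp Fp_inv.
have [x0 Fx0] := probability_ae_exists Fpw.
have w1 : `|w| = 1 by rewrite -Fx0 normrX F1 expr1n.
have p_gt0 := prime_gt0 p_prime.
exists (p.-root w^-1); split; first by rewrite norm_rootC normfV w1 invr1 rootC1.
apply: filterS Fpw => x Fx; rewrite exprMn rootCK // Fx mulVf //.
by rewrite -normr_eq0 w1 oner_eq0.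
Qed.
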